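(* Let $x_1,\dots,x_n$ be indeterminates, $R=\mathbb R[x_1,\dots,x_n]$, and $f_1,\dots,f_n\in R$. Let $g_1,\dots,g_n$ be the (unique) elements of the fraction field of $R$ such that $\mathfrak p(x)=\sum_{i=1}^n g_i x^{i-1}$ satisfies $\mathfrak p(x_j)=f_j$ for $j=1,\dots,n$. Then all $g_i$ lie in $R$ if and only if $x_i-x_j$ divides $f_i-f_j$ in $R$ for all $i\neq j$. *)

From HB Require Import structures.
From mathcomp Require Import all_boot all_order all_algebra.
From mathcomp Require Import reals.
From mathcomp Require Import mpoly.
Set Implicit Arguments. Unset Strict Implicit. Unset Printing Implicit Defensive.
Import Order.TTheory GRing.Theory Num.Theory.
Local Open Scope ring_scope.

(* The polynomial ring R = RR[x_1,...,x_n]; variables x_{i+1} = 'X_i, i : 'I_n. *)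
Notation polyR R n := {mpoly R[n]}.
Notation fracR R n := {fraction {mpoly R[n]}}.

(* g (indexed by i : 'I_n, g i standing for g_{i+1}) is the coefficient vector
   of p(x) = sum_i g_{i} x^{i-1} with p(x_j) = f_j for all j,
   computed in the fraction field of R. *)
Definition interpolates (R : realType) (n : nat)
  (f : 'I_n -> {mpoly R[n]}) (g : 'I_n -> {fraction {mpoly R[n]}}) : Prop :=
  forall j : 'I_n, \sum_(i < n) g i * (tofrac ('X_j : {mpoly R[n]})) ^+ i = tofrac (f j).

Definition mdvd (R : realType) (n : nat) (a b : {mpoly R[n]}) : Prop :=
  exists q : {mpoly R[n]}, b = q * a.

From HB Require Import structures.
From mathcomp Require Import all_boot all_order all_algebra.
From mathcomp Require Import reals.
From mathcomp Require Import mpoly ring.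
Set Implicit Arguments. Unset Strict Implicit. Unset Printing Implicit Defensive.
Import Order.TTheory GRing.Theory Num.Theory.
Local Open Scope ring_scope.

(* Newton interpolation: if p' interpolates the divided differences
   Q_i = (F_i - F_k) / (x_i - x_k) at the nodes other than x_k, then
   F_k + (X - x_k) p' interpolates F at all nodes.  Under the divisibility
   hypothesis each Q_i is a polynomial, and the hypothesis passes to the Q_i:
   substituting x_j := x_i shows that x_i - x_j divides u whenever it divides
   u (x_i - x_k), and (Q_i - Q_j)(x_i - x_k) = (c - Q_j)(x_i - x_j) when
   F_i - F_j = c (x_i - x_j).  Conversely x_i - x_j divides p(x_i) - p(x_j)
   for every polynomial p, and the interpolant is unique because a polynomial
   of degree < n over the fraction field is determined by n distinct values. *)

Definition divides (A : pzRingType) (d x : A) : Prop := exists q, x = q * d.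

Section Divisibility.
Variable A : comNzRingType.
Implicit Types d x y : A.

Lemma dividesMl d c x : divides d x -> divides d (c * x).
Proof. by move=> [q ->]; exists (c * q); rewrite mulrA. Qed.

Lemma divides_sum (I : Type) (r : seq I) d (F : I -> A) :
  (forall i, divides d (F i)) -> divides d (\sum_(i <- r) F i).
Proof.
move=> dF; elim/big_rec: _ => [|i x _ [q ->]]; first by exists 0; rewrite mul0r.
by have [p ->] := dF i; exists (p + q); rewrite mulrDl.
Qed.

Lemma divides_prodB (I : Type) (r : seq I) d (F G : I -> A) :
  (forall i, divides d (F i - G i)) ->
  divides d (\prod_(i <- r) F i - \prod_(i <- r) G i).
Proof.
move=> dFG; elim/big_rec2: _ => [|i z x _ [q xz]].
  by exists 0; rewrite subrr mul0r.
have [p FG] := dFG i; exists (F i * q + p * z).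
by rewrite mulrDl -(mulrA (F i)) -xz mulrAC -FG mulrBr mulrBl addrA subrK.
Qed.

Lemma divides_subXX d x y k : divides d (x - y) -> divides d (x ^+ k - y ^+ k).
Proof. by move=> [q xy]; rewrite subrXX xy mulrC; apply: dividesMl; exists q. Qed.

Lemma divides_hornerB (p : {poly A}) x y : divides (x - y) (p.[x] - p.[y]).
Proof.
have /factor_theorem [q pq] : root (p - p.[y]%:P) y by rewrite rootE !hornerE subrr.
by exists q.[x]; have := congr1 (horner^~ x) pq; rewrite !hornerE.
Qed.

Lemma divides_choice (I : eqType) (s : seq I) (d x : I -> A) :
  {in s, forall i, divides (d i) (x i)} ->
  exists q : I -> A, {in s, forall i, x i = q i * d i}.
Proof.
move=> dx; have qP i : exists q, (i \in s) ==> (x i == q * d i).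
  case: (boolP (i \in s)) => [/dx [q xq]|_]; last by exists 0.
  by exists q; rewrite xq eqxx.
by exists (fun i => xchoose (qP i)) => i /(implyP (xchooseP (qP i))) /eqP.
Qed.

End Divisibility.

Lemma divides_field (K : fieldType) (d x : K) : d != 0 -> divides d x.
Proof. by move=> d0; exists (x / d); rewrite divfK. Qed.

Section NewtonInterpolation.
Variables (A : comNzRingType) (I : eqType) (y : I -> A).

Definition dvd_compatible (s : seq I) (F : I -> A) : Prop :=
  {in s &, forall i j, i != j -> divides (y i - y j) (F i - F j)}.

Hypothesis divides_cancel_node : forall i j k u, i != j -> k != i -> k != j ->
  divides (y i - y j) (u * (y i - y k)) -> divides (y i - y j) u.

Lemma divides_divided_difference i j k (F_i F_j F_k Q_i Q_j : A) :
    i != j -> k != i -> k != j -> divides (y i - y j) (F_i - F_j) ->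
    F_i - F_k = Q_i * (y i - y k) -> F_j - F_k = Q_j * (y j - y k) ->
  divides (y i - y j) (Q_i - Q_j).
Proof.
move=> ij ki kj [c Fij] Qi Qj; apply: (divides_cancel_node ij ki kj).
have e : c * (y i - y j) = Q_i * (y i - y k) - Q_j * (y j - y k).
  by rewrite -Fij -Qi -Qj opprB addrA subrK.
by exists (c - Q_j); rewrite [RHS]mulrBl e; ring.
Qed.

Lemma newton_interpolation s F : uniq s -> dvd_compatible s F ->
  exists2 p : {poly A}, (size p <= size s)%N & {in s, forall i, p.[y i] = F i}.
Proof.
elim: s F => [|k s IHs] F; first by exists 0; rewrite ?size_poly0.
case/andP=> ks us dF.
have dFk : {in s, forall i, divides (y i - y k) (F i - F k)}.
  move=> i si; apply: dF; rewrite ?inE ?si ?eqxx ?orbT //.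
  by apply: contraNneq ks => <-.
have [Q FQ] := divides_choice dFk.
have dQ : dvd_compatible s Q.
  move=> i j si sj ij; have [ki kj] : k != i /\ k != j.
    by split; apply: contraNneq ks => ->.
  apply: (divides_divided_difference ij ki kj _ (FQ i si) (FQ j sj)).
  by apply: dF; rewrite ?inE ?si ?sj ?orbT.
have [p szp pQ] := IHs Q us dQ.
exists (p * ('X - (y k)%:P) + (F k)%:P).
  rewrite (leq_trans (size_polyD _ _)) // geq_max size_polyC.
  apply/andP; split; last by case: (F k != 0).
  by rewrite (leq_trans (size_mul_leq _ _)) // size_XsubC addn2.
move=> i; rewrite inE => /predU1P [-> | si].
  by rewrite !hornerE subrr mulr0 add0r.
by rewrite !hornerE pQ // -FQ // subrK.
Qed.

End NewtonInterpolation.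

Lemma divides_comp_mpolyB (R : comNzRingType) (n k : nat) (d : {mpoly R[k]})
    (t t' : n.-tuple {mpoly R[k]}) (p : {mpoly R[n]}) :
  (forall i, divides d (tnth t i - tnth t' i)) ->
  divides d ((p \mPo t) - (p \mPo t')).
Proof.
move=> dtt'; rewrite !comp_mpolyEX -sumrB; apply: divides_sum => m.
rewrite !comp_mpolyX -scalerBr -mul_mpolyC; apply: dividesMl.
by apply: divides_prodB => i; apply: divides_subXX.
Qed.

Section SubstituteVariable.
Variables (R : idomainType) (n : nat).
Local Notation P := {mpoly R[n]}.

Lemma mpolyXU_inj : injective (fun i : 'I_n => 'X_i : P).
Proof.
move=> i j /= Xij; have := mcoeffXU R i j; rewrite Xij mcoeffXU eqxx.
by case: eqP => // _ /eqP; rewrite /= oner_eq0.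
Qed.

Definition subst_var (i j : 'I_n) : n.-tuple P :=
  [tuple if l == j then 'X_i else 'X_l | l < n].

Lemma comp_subst_varX i j l :
  'X_l \mPo subst_var i j = if l == j then 'X_i else 'X_l.
Proof. by rewrite comp_mpolyXU -tnth_nth tnth_mktuple. Qed.

Lemma divides_sub_comp_subst_var i j (p : P) :
  divides ('X_i - 'X_j) (p - (p \mPo subst_var i j)).
Proof.
rewrite -{1}[p]comp_mpoly_id; apply: divides_comp_mpolyB => l.
rewrite !tnth_mktuple; case: eqP => [->|_]; last by exists 0; rewrite subrr mul0r.
by exists (-1); rewrite mulN1r opprB.
Qed.

Lemma divides_cancel_mpolyXB i j k (u : P) : i != j -> k != i -> k != j ->
  divides ('X_i - 'X_j) (u * ('X_i - 'X_k)) -> divides ('X_i - 'X_j) u.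
Proof.
move=> ij ki kj [q uq].
have /eqP : (u \mPo subst_var i j) * ('X_i - 'X_k) = 0.
  have := congr1 (comp_mpoly (subst_var i j)) uq.
  rewrite !rmorphM !rmorphB /= !comp_subst_varX eqxx !if_same (negbTE kj).
  by rewrite subrr mulr0.
have Xik : 'X_i != 'X_k :> P by apply: contra_neq ki => /mpolyXU_inj ->.
rewrite mulf_eq0 subr_eq0 (negbTE Xik) orbF => /eqP u0.
by have := divides_sub_comp_subst_var i j u; rewrite u0 subr0.
Qed.

End SubstituteVariable.

Lemma poly_eq_on_uniq (K : idomainType) (p q : {poly K}) (s : seq K) :
    uniq s -> (size p <= size s)%N -> (size q <= size s)%N ->
  {in s, forall x, p.[x] = q.[x]} -> p = q.
Proof.
move=> us szp szq pq; apply/eqP; rewrite -subr_eq0; apply: contraT => pq0.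
have roots : all (root (p - q)) s.
  by apply/allP => x /pq pqx; rewrite rootE !hornerE pqx subrr.
have := max_poly_roots pq0 roots us; rewrite ltnNge (leq_trans (size_polyD _ _)) //.
by rewrite geq_max size_opp szp szq.
Qed.

Section OrdinalPoly.
Variables (A : comNzRingType) (n : nat).

Definition ord_poly (g : 'I_n -> A) : {poly A} := \sum_(i < n) g i *: 'X^i.

Lemma size_ord_poly g : (size (ord_poly g) <= n)%N.
Proof.
rewrite (leq_trans (size_sum _ _ _)) //; apply/bigmax_leqP => i _.
by rewrite (leq_trans (size_scale_leq _ _)) // size_polyXn.
Qed.

Lemma coef_ord_poly g (i : 'I_n) : (ord_poly g)`_i = g i.
Proof. by rewrite coef_sumMXn (big_pred1 i) // => j; rewrite val_eqE. Qed.

Lemma horner_ord_poly g x : (ord_poly g).[x] = \sum_(i < n) g i * x ^+ i.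
Proof. by rewrite horner_sum; apply: eq_bigr => i _; rewrite hornerZ hornerXn. Qed.

End OrdinalPoly.

Section Proposition.
Variables (R : realType) (n : nat).
Local Notation P := {mpoly R[n]}.
Local Notation K := {fraction P}.
Implicit Types (f : 'I_n -> P) (g : 'I_n -> K).

Let node (j : 'I_n) : K := tofrac 'X_j.

Lemma node_inj : injective node.
Proof. by move=> i j /eqP; rewrite tofrac_eq => /eqP /mpolyXU_inj. Qed.

Lemma interpolatesE f g :
  interpolates f g <-> forall j, (ord_poly g).[node j] = tofrac (f j).
Proof.
by split=> fg j; [rewrite horner_ord_poly | rewrite -horner_ord_poly]; apply: fg.
Qed.

Lemma interpolates_coef f (p : {poly K}) : (size p <= n)%N ->
  (forall j, p.[node j] = tofrac (f j)) -> interpolates f (fun i => p`_i).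
Proof. by move=> szp pf j; rewrite -pf (horner_coef_wide _ szp). Qed.

Lemma interpolates_unique f g g' :
  interpolates f g -> interpolates f g' -> g =1 g'.
Proof.
move=> /interpolatesE fg /interpolatesE fg' i.
have unodes : uniq (map node (enum 'I_n)).
  by rewrite (map_inj_uniq node_inj) enum_uniq.
have szn : size (map node (enum 'I_n)) = n by rewrite size_map size_enum_ord.
have : ord_poly g = ord_poly g'.
  apply: (poly_eq_on_uniq unodes); rewrite ?szn ?size_ord_poly //.
  by move=> _ /mapP [j _ ->]; rewrite fg fg'.
by move=> e; rewrite -(coef_ord_poly g) -(coef_ord_poly g') e.
Qed.

Lemma interpolates_exists f : exists g, interpolates f g.
Proof.
have nodeB_neq0 i j : i != j -> node i - node j != 0.
  by rewrite subr_eq0 (inj_eq node_inj).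
have [||p szp pf] := newton_interpolation (y := node)
    (F := fun j => tofrac (f j)) _ (enum_uniq 'I_n).
- by move=> i j k u ij _ _ _; apply/divides_field/nodeB_neq0.
- by move=> i j _ _ ij; apply/divides_field/nodeB_neq0.
rewrite size_enum_ord in szp.
by exists (fun i => p`_i); apply: interpolates_coef => // j; rewrite pf ?mem_enum.
Qed.

Lemma interpolates_tofrac f g (h : 'I_n -> P) : interpolates f g ->
  (forall i, g i = tofrac (h i)) -> forall j, f j = (ord_poly h).['X_j].
Proof.
move=> fg gh j; apply/eqP; rewrite -tofrac_eq -fg horner_ord_poly rmorph_sum.
by apply/eqP/eq_bigr => i _; rewrite rmorphM rmorphXn gh.
Qed.

Lemma polynomial_interpolant f :
    (forall i j, i != j -> mdvd ('X_i - 'X_j) (f i - f j)) ->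
  exists h : 'I_n -> P, interpolates f (fun i => tofrac (h i)).
Proof.
move=> fdvd; have [||p szp pf] := newton_interpolation (y := fun i => 'X_i) (F := f)
    _ (enum_uniq 'I_n).
- by move=> i j k u; apply: divides_cancel_mpolyXB.
- by move=> i j _ _; apply: fdvd.
rewrite size_enum_ord in szp; exists (fun i => p`_i) => j.
rewrite -pf ?mem_enum // (horner_coef_wide _ szp) rmorph_sum.
by apply: eq_bigr => i _; rewrite rmorphM rmorphXn.
Qed.

End Proposition.

Theorem proposition3p2 (R : realType) (n : nat) (f : 'I_n -> {mpoly R[n]}) :
  (exists g, interpolates f g) /\
  (forall g g', interpolates f g -> interpolates f g' -> g = g') /\
  (forall g, interpolates f g ->
    ((forall i : 'I_n, exists h : {mpoly R[n]}, g i = tofrac h) <->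
     (forall i j : 'I_n, i != j -> mdvd ('X_i - 'X_j) (f i - f j)))).
Proof.
split; first exact: interpolates_exists.
split=> [g g' fg fg' | g fg].
  exact/boolp.funext/(interpolates_unique fg fg').
split=> [/fin_all_exists [h gh] i j _ | /polynomial_interpolant [h fh] i].
  rewrite !(interpolates_tofrac fg gh); exact: divides_hornerB.
by exists (h i); apply: interpolates_unique fg fh i.
Qed.
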